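(* For every $n\in\mathbb{N}$ and every formula $\varphi$ of $\mathbf{CPN}_n$: if $\models_{(n)}\varphi$ then $\vdash_{(n)}\varphi$.
   Context: Fix $n\in\mathbb{N}$, $n\ge 1$, and write $[n]=\{1,\dots,n\}$. Chains: a chain over $[n]$ is a finite sequence of distinct elements of $[n]$; chains with the same length and the same symbols are identified, so a chain is effectively a subset of $[n]$. $c_k$ denotes a chain with $k$ symbols, $\epsilon$ the empty chain, and $(n)$ the chain consisting of all symbols of $[n]$. For chains $c,d$: the concatenation $c\cdot d$ is the chain of symbols occurring in $c$ or in $d$; the coconcatenation $c\otimes d$ is the chain of symbols occurring in exactly one of $c,d$; $d$ is a subchain of $c$ if every symbol of $d$ is a symbol of $c$. The complementary chain $c'_{n-k}$ of $c_k$ is the chain of the symbols of $[n]$ not occurring in $c_k$. Language of $\mathbf{CPN}_n$: a countable set $P_n$ of propositional letters; constants $\perp_c$ for each chain $c$ over $[n]$ with $1\le |c|\le n-1$, and constants $\perp_{(n)}$ (contradiction) and $\top_{(n)}$ (truth); a unary connective $\neg_c$ for each nonempty chain $c$ over $[n]$ ($\neg_{(n)}$ is the strong negation; the $\neg_c$ with $|c|\le n-1$ are weak negations); a binary connective $\to_{(n)}$. Formulas: propositional letters and constants are formulas; if $\varphi,\psi$ are formulas then so are $\neg_c\varphi$ and $(\varphi\to_{(n)}\psi)$. Conventions: $\neg_\epsilon\varphi:=\varphi$, $\perp_\epsilon:=\top_{(n)}$, and $\perp_c$ for $c=(n)$ means $\perp_{(n)}$. Abbreviations: $\varphi\wedge_{(n)}\psi:=\neg_{(n)}(\varphi\to_{(n)}\neg_{(n)}\psi)$,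 $\varphi\vee_{(n)}\psi:=\neg_{(n)}\varphi\to_{(n)}\psi$, $\varphi\leftrightarrow_{(n)}\psi:=(\varphi\to_{(n)}\psi)\wedge_{(n)}(\psi\to_{(n)}\varphi)$. Axioms of $\mathbf{CPN}_n$, for all formulas $\varphi,\psi,\chi$ and all nonempty chains $c_k,c_r$ over $[n]$: (A1) $\varphi\to_{(n)}(\psi\to_{(n)}\varphi)$; (A2) $(\varphi\to_{(n)}(\psi\to_{(n)}\chi))\to_{(n)}((\varphi\to_{(n)}\psi)\to_{(n)}(\varphi\to_{(n)}\chi))$; (A3) $(\neg_{(n)}\psi\to_{(n)}\neg_{(n)}\varphi)\to_{(n)}((\neg_{(n)}\psi\to_{(n)}\varphi)\to_{(n)}\psi)$; (A4) $\varphi\to_{(n)}(\perp_{c_k}\to_{(n)}\neg_{c_k}\varphi)$; (A5) $\neg_{c_k}\neg_{c_r}\varphi\leftrightarrow_{(n)}\neg_{c_k\otimes c_r}\varphi$; (A6) $\neg_{c_k}\perp_{c_r}\leftrightarrow_{(n)}\perp_{c_k\otimes c_r}$; (A7) $\perp_{c_k}\to_{(n)}\perp_{c_r}$, whenever $c_r$ is a subchain of $c_k$. The only rule of inference is modus ponens (from $\varphi$ and $\varphi\to_{(n)}\psi$ infer $\psi$). For a set $\Sigma$ of formulas, $\Sigma\vdash_{(n)}\varphi$ means there is a finite sequence of formulas ending with $\varphi$, each of which is an axiom, a member of $\Sigma$, or obtained from two earlier members by modus ponens; $\vdash_{(n)}\varphi$ means $\emptyset\vdash_{(n)}\varphi$.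 Semantics: for each $i\in[n]$ there is a world $\mathcal M_i=\{T_i,F_i\}$ (pairwise disjoint sets). A valuation $\mathcal V$ assigns to each propositional letter $p$ and each $i\in[n]$ a value $v_i(p)\in\mathcal M_i$ (independently for different $i$). It extends to all formulas, for each $i$, by: $\bar v_i(p)=v_i(p)$ for letters; $\bar v_i(\perp_c)=F_i$ if $i$ is a symbol of $c$ and $T_i$ otherwise (so $\bar v_i(\perp_{(n)})=F_i$ and $\bar v_i(\top_{(n)})=T_i$); $\bar v_i(\neg_c\varphi)=\bar v_i(\varphi)$ if $i$ is not a symbol of $c$, and the opposite value ($T_i\leftrightarrow F_i$) if $i$ is a symbol of $c$; $\bar v_i(\varphi\to_{(n)}\psi)=F_i$ iff $\bar v_i(\varphi)=T_i$ and $\bar v_i(\psi)=F_i$, otherwise $T_i$ (hence $\wedge_{(n)},\vee_{(n)}$ behave classically in each world). Write $\bar{\mathcal V}(\varphi)=(\bar v_1(\varphi),\dots,\bar v_n(\varphi))$. A formula $\varphi$ is a tautology, written $\models_{(n)}\varphi$, iff $\bar{\mathcal V}(\varphi)=(T_1,\dots,T_n)$ for every valuation $\mathcal V$. *)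

From mathcomp Require Import all_boot.

Set Implicit Arguments.
Unset Strict Implicit.
Unset Printing Implicit Defensive.

Section CPN.
Variable n : nat.

(* A chain over [n] is identified with its set of symbols; symbols 1..n are
   represented by 'I_n (0..n-1). *)
Definition chain := {set 'I_n}.

Definition nzchain := {c : chain | c != set0}.

(* Formulas.  [Bot c] is the constant ⊥_c; by the paper's conventions
   ⊥_ε = ⊤_(n) and ⊥_(n) (c = full chain) is the contradiction, so the
   constants are exactly the Bot c for c ranging over all chains. *)
Inductive form : Type :=
| Var of nat
| Bot of chain
| Neg of nzchain & form
| Imp of form & form.

Definition cocat (c d : chain) : chain := (c :\: d) :|: (d :\: c).

(* ¬_c φ for an arbitrary chain c, with the convention ¬_ε φ := φ *)
Definition neg (c : chain) (phi : form) : form :=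
  match insub c with Some c' => Neg c' phi | None => phi end.

Definition negN (phi : form) : form := neg setT phi.
Definition andN (phi psi : form) : form := negN (Imp phi (negN psi)).
Definition iffN (phi psi : form) : form := andN (Imp phi psi) (Imp psi phi).

Inductive axiom : form -> Prop :=
| A1 phi psi : axiom (Imp phi (Imp psi phi))
| A2 phi psi chi :
    axiom (Imp (Imp phi (Imp psi chi)) (Imp (Imp phi psi) (Imp phi chi)))
| A3 phi psi :
    axiom (Imp (Imp (negN psi) (negN phi)) (Imp (Imp (negN psi) phi) psi))
| A4 phi (ck : nzchain) : axiom (Imp phi (Imp (Bot (val ck)) (Neg ck phi)))
| A5 phi (ck cr : nzchain) :
    axiom (iffN (Neg ck (Neg cr phi)) (neg (cocat (val ck) (val cr)) phi))
| A6 (ck cr : nzchain) :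
    axiom (iffN (Neg ck (Bot (val cr))) (Bot (cocat (val ck) (val cr))))
| A7 (ck cr : nzchain) :
    val cr \subset val ck -> axiom (Imp (Bot (val ck)) (Bot (val cr))).

Inductive derivable (Sigma : form -> Prop) : form -> Prop :=
| d_ax phi : axiom phi -> derivable Sigma phi
| d_hyp phi : Sigma phi -> derivable Sigma phi
| d_mp phi psi : derivable Sigma phi -> derivable Sigma (Imp phi psi) ->
                 derivable Sigma psi.

Definition provable (phi : form) : Prop := derivable (fun _ => False) phi.

(* Semantics: in world i, T_i is [true] and F_i is [false]. A valuation
   assigns to each letter and each world a truth value. *)
Definition valuation := nat -> 'I_n -> bool.

Fixpoint eval (v : valuation) (i : 'I_n) (phi : form) : bool :=
  match phi with
  | Var p => v p i
  | Bot c => i \notin c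
  | Neg c psi => (i \in val c) (+) eval v i psi
  | Imp psi chi => eval v i psi ==> eval v i chi
  end.

Definition tautology (phi : form) : Prop :=
  forall (v : valuation) (i : 'I_n), eval v i phi = true.

End CPN.

From mathcomp Require Import all_boot.

Set Implicit Arguments.
Unset Strict Implicit.
Unset Printing Implicit Defensive.

(* Kalmár's completeness argument, run one world at a time.  The constant
   [delta i], i.e. ⊥ over every symbol except i, holds exactly in world i, and
   it decides every ⊥_c as world i does.  Hence from [delta i] and the letters
   signed by their values in world i, every formula is derivable with the sign
   of its value in world i.  For a tautology the letters are then eliminated by
   case splits, leaving ⊢ delta i → φ for every i.  Finally, under ¬φ every
   delta i is refuted, which yields ⊥_{i}, and by A4 and A6 these join into
   ⊥_(n), which is refutable. *)

Section Calculus.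
Variable n : nat.
Implicit Types (S : form n -> Prop) (phi psi a b : form n) (c d : chain n).

Definition with_hyp S a : form n -> Prop := fun x => S x \/ x = a.

Local Notation "S ⊢ phi" := (derivable S phi) (at level 70, no associativity).
Local Notation "¬ x" := (negN x) (at level 35, right associativity).

Lemma ax S phi : axiom phi -> S ⊢ phi.
Proof. exact: d_ax. Qed.
Arguments ax {S phi}.

Lemma mp S a b : S ⊢ Imp a b -> S ⊢ a -> S ⊢ b.
Proof. by move=> hab ha; apply: d_mp ha hab. Qed.

Lemma derivable_mono S S' phi :
  (forall x, S x -> S' x) -> S ⊢ phi -> S' ⊢ phi.
Proof.
move=> sub; elim=> [x /d_ax //|x /sub/d_hyp //|x y _ hx _ hxy].
exact: d_mp hx hxy.
Qed.

Lemma with_hyp_self S a : with_hyp S a ⊢ a.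
Proof. by apply: d_hyp; right. Qed.

Lemma with_hypW S a phi : S ⊢ phi -> with_hyp S a ⊢ phi.
Proof. by apply: derivable_mono => x; left. Qed.

Lemma imp_refl S a : S ⊢ Imp a a.
Proof.
apply: mp (ax (A1 a a)); apply: mp (ax (A1 a (Imp a a))).
exact: ax (A2 a (Imp a a) a).
Qed.

Lemma deduction S a b : with_hyp S a ⊢ b -> S ⊢ Imp a b.
Proof.
elim=> [x ax_x|x [Sx|->]|x y _ hx _ hxy].
- exact: mp (ax (A1 x a)) (ax ax_x).
- exact: mp (ax (A1 x a)) (d_hyp Sx).
- exact: imp_refl.
- exact: mp (mp (ax (A2 _ _ _)) hxy) hx.
Qed.

Lemma imp_trans S a b (e : form n) :
  S ⊢ Imp a b -> S ⊢ Imp b e -> S ⊢ Imp a e.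
Proof.
move=> hab hbe; apply: deduction.
exact: mp (with_hypW _ hbe) (mp (with_hypW _ hab) (with_hyp_self _ _)).
Qed.

Lemma imp_const S a b : S ⊢ b -> S ⊢ Imp a b.
Proof. exact: mp (ax (A1 _ _)). Qed.

Lemma dneg_elim S b : S ⊢ Imp (¬ ¬ b) b.
Proof.
apply: deduction; apply: mp (imp_refl _ (¬ b)).
exact: mp (ax (A3 _ _)) (imp_const _ (with_hyp_self _ _)).
Qed.

Lemma dneg_intro S b : S ⊢ Imp b (¬ ¬ b).
Proof.
apply: deduction; apply: mp (imp_const _ (with_hyp_self _ _)).
exact: mp (ax (A3 _ _)) (dneg_elim _ _).
Qed.

Lemma absurd S a b : S ⊢ ¬ a -> S ⊢ a -> S ⊢ b.
Proof.
move=> hna ha; apply: mp (imp_const (¬ b) ha).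
exact: mp (ax (A3 _ _)) (imp_const _ hna).
Qed.

Lemma imp_of_contra S a b : S ⊢ Imp (¬ b) (¬ a) -> S ⊢ Imp a b.
Proof.
move=> h; apply: deduction; apply: mp (imp_const _ (with_hyp_self _ _)).
exact: mp (ax (A3 _ _)) (with_hypW _ h).
Qed.

Lemma contraposition S a b : S ⊢ Imp a b -> S ⊢ Imp (¬ b) (¬ a).
Proof.
move=> hab; apply: imp_of_contra.
exact: imp_trans (imp_trans (dneg_elim _ _) hab) (dneg_intro _ _).
Qed.

Lemma by_cases S a b : S ⊢ Imp a b -> S ⊢ Imp (¬ a) b -> S ⊢ b.
Proof.
move=> hab hnab.
exact: mp (mp (ax (A3 _ _)) (contraposition hnab)) (contraposition hab).
Qed.

Lemma with_hyp_cases S a b :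
  with_hyp S a ⊢ b -> with_hyp S (¬ a) ⊢ b -> S ⊢ b.
Proof. by move=> ha hna; apply: (@by_cases _ a); apply: deduction. Qed.

Lemma imp_absurd S a b : S ⊢ ¬ a -> S ⊢ Imp a b.
Proof.
move=> hna; apply: deduction.
exact: absurd (with_hypW _ hna) (with_hyp_self _ _).
Qed.

Lemma neg_imp S a b : S ⊢ a -> S ⊢ ¬ b -> S ⊢ ¬ Imp a b.
Proof.
move=> ha; apply: mp; apply: contraposition; apply: deduction.
exact: mp (with_hyp_self _ _) (with_hypW _ ha).
Qed.

Lemma andN_l S a b : S ⊢ andN a b -> S ⊢ a.
Proof.
move=> hab; apply: mp (dneg_elim _ _) (mp _ hab); apply: contraposition.
exact: deduction (imp_absurd _ (with_hyp_self _ _)).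
Qed.

Lemma andN_r S a b : S ⊢ andN a b -> S ⊢ b.
Proof.
move=> hab; apply: mp (dneg_elim _ _) (mp _ hab).
exact: contraposition (ax (A1 _ _)).
Qed.

Lemma negE (c : nzchain n) phi : neg (val c) phi = Neg c phi.
Proof. by rewrite /neg valK. Qed.

Lemma neg0 phi : neg set0 phi = phi.
Proof. by rewrite /neg; case: insubP => //= c; rewrite eqxx. Qed.

Lemma cocat0l d : cocat set0 d = d.
Proof. by apply/setP => x; rewrite !inE; case: (x \in d). Qed.

Lemma cocat0r d : cocat d set0 = d.
Proof. by apply/setP => x; rewrite !inE; case: (x \in d). Qed.

Lemma cocatTl d : cocat setT d = ~: d.
Proof. by apply/setP => x; rewrite !inE; case: (x \in d). Qed.

Lemma cocatC c d : cocat c d = cocat d c.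
Proof.
by apply/setP => x; rewrite !inE; case: (x \in c); case: (x \in d).
Qed.

Lemma cocat_setD c d : cocat c (d :\: c) = c :|: d.
Proof.
by apply/setP => x; rewrite !inE; case: (x \in c); case: (x \in d).
Qed.

Lemma neg_intro S c phi : S ⊢ Imp phi (Imp (Bot c) (neg c phi)).
Proof.
have [->|c0] := eqVneq c set0; first by rewrite neg0; apply: ax (A1 _ _).
by rewrite -[c]/(val (exist _ c c0 : nzchain n)) negE; apply: ax (A4 _ _).
Qed.

Lemma neg_negE S c d phi : S ⊢ neg c (neg d phi) <-> S ⊢ neg (cocat c d) phi.
Proof.
have [->|c0] := eqVneq c set0; first by rewrite cocat0l neg0.
have [->|d0] := eqVneq d set0; first by rewrite cocat0r neg0.
have := @ax S _ (A5 phi (exist _ c c0) (exist _ d d0)).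
rewrite -!negE /= => h.
by split; apply: mp; [apply: andN_l h | apply: andN_r h].
Qed.

Lemma neg_BotE S c d : c != set0 -> d != set0 ->
  S ⊢ neg c (Bot d) <-> S ⊢ Bot (cocat c d).
Proof.
move=> c0 d0; have := @ax S _ (A6 (exist _ c c0) (exist _ d d0)).
rewrite -negE /= => h.
by split; apply: mp; [apply: andN_l h | apply: andN_r h].
Qed.

Lemma Bot_subset S c d : d != set0 -> d \subset c -> S ⊢ Imp (Bot c) (Bot d).
Proof.
move=> d0 dc; have c0 : c != set0.
  by apply: contraNneq d0 => c_0; rewrite -subset0 -c_0.
exact: ax (@A7 _ (exist _ c c0) (exist _ d d0) dc).
Qed.

(* A4 gives ¬_d ¬_e ψ, and A5 identifies it with ¬_{d⊗e} ψ = ¬_{e⊗d} ψ. *)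
Lemma neg_insert S d e psi :
  S ⊢ Bot d -> S ⊢ neg e psi -> S ⊢ neg e (neg d psi).
Proof.
move=> hd he; apply/neg_negE; rewrite cocatC; apply/neg_negE.
exact: mp (mp (neg_intro _ _ _) he) hd.
Qed.

Lemma negN_negE S c psi : S ⊢ ¬ neg c psi <-> S ⊢ neg (~: c) psi.
Proof. by rewrite -cocatTl; apply: neg_negE. Qed.

Lemma negN_BotT S : S ⊢ ¬ Bot setT.
Proof.
apply: (@by_cases _ (Bot setT)); last exact: imp_refl.
apply: deduction; have hT := with_hyp_self S (Bot setT).
exact: mp (mp (neg_intro _ _ _) hT) hT.
Qed.

Section PositiveArity.
Hypothesis n_gt0 : (0 < n)%N.

Lemma setT_neq0 : (setT : chain n) != set0.
Proof. by apply/set0Pn; exists (Ordinal n_gt0). Qed.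

Lemma Bot0 S : S ⊢ Bot set0.
Proof.
rewrite -(setCK set0) setC0 -cocatTl.
exact/(neg_BotE _ setT_neq0 setT_neq0)/negN_BotT.
Qed.

Lemma Bot_setU S c d : S ⊢ Bot c -> S ⊢ Bot d -> S ⊢ Bot (c :|: d).
Proof.
move=> hc hd; have [c_0|c0] := eqVneq c set0; first by rewrite c_0 set0U.
have hdc : S ⊢ Bot (d :\: c).
  have [->|dc0] := eqVneq (d :\: c) set0; first exact: Bot0.
  exact: mp (Bot_subset _ dc0 (subsetDl d c)) hd.
have [dc_0|dc0] := eqVneq (d :\: c) set0.
  by move/eqP: dc_0; rewrite setD_eq0 => /setUidPl ->.
rewrite -cocat_setD; apply/(neg_BotE _ c0 dc0).
exact: mp (mp (neg_intro _ _ _) hdc) hc.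
Qed.

Lemma Bot_bigcup S c : (forall i, i \in c -> S ⊢ Bot [set i]) -> S ⊢ Bot c.
Proof.
move=> h1; have -> : c = \bigcup_(i in c) [set i].
  apply/setP => x; apply/idP/bigcupP => [xc|[i ic]].
    by exists x; rewrite ?inE.
  by rewrite inE => /eqP ->.
exact: (big_ind (fun d => S ⊢ Bot d) (Bot0 S) (@Bot_setU S)).
Qed.

Lemma Bot_setC S c : S ⊢ ¬ Bot c -> S ⊢ Bot (~: c).
Proof.
have [->|c0] := eqVneq c set0 => hc; first exact: absurd hc (Bot0 S).
by rewrite -cocatTl; apply/(neg_BotE _ setT_neq0 c0).
Qed.

Lemma negN_Bot_setC S c : S ⊢ Bot (~: c) -> S ⊢ ¬ Bot c.
Proof.
have [->|c0] := eqVneq c set0 => hc.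
  by rewrite setC0 in hc; apply: absurd (negN_BotT S) hc.
by apply/(neg_BotE _ setT_neq0 c0); rewrite cocatTl.
Qed.

Definition delta (i : 'I_n) : form n := Bot (~: [set i]).

Lemma delta_Bot S i c : S ⊢ delta i -> i \notin c -> S ⊢ Bot c.
Proof.
move=> hi ic; have [->|c0] := eqVneq c set0; first exact: Bot0.
apply: mp hi; apply: Bot_subset c0 _.
by apply/subsetP => x xc; rewrite !inE; apply: contraNneq ic => <-.
Qed.

Lemma delta_negN_Bot S i c : S ⊢ delta i -> i \in c -> S ⊢ ¬ Bot c.
Proof.
move=> hi ic; apply: mp (negN_Bot_setC hi); apply: contraposition.
by apply: Bot_subset; [apply/set0Pn; exists i; rewrite inE | rewrite sub1set].
Qed.

Definition signed (b : bool) phi : form n := if b then phi else ¬ phi.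

Lemma signed_neg_insert S (b : bool) d psi :
  S ⊢ Bot d -> S ⊢ signed b psi -> S ⊢ signed b (neg d psi).
Proof.
move=> hd; case: b => /= h; last exact: neg_insert hd h.
by have := @neg_insert S d set0 psi hd; rewrite !neg0; apply.
Qed.

Fixpoint var_bound phi : nat :=
  match phi with
  | Var p => p.+1
  | Bot _ => 0
  | Neg _ psi => var_bound psi
  | Imp psi chi => maxn (var_bound psi) (var_bound chi)
  end.

Lemma delta_signed_eval S v i k phi :
  S ⊢ delta i -> (forall p, (p < k)%N -> S ⊢ signed (v p i) (Var n p)) ->
  (var_bound phi <= k)%N -> S ⊢ signed (eval v i phi) phi.
Proof.
move=> hi hvars; elim: phi => [p /hvars //|c _|c psi IH /IH {}IH|a IHa b IHb].
- rewrite /= /signed if_neg; case: ifP => ic.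
    exact: delta_negN_Bot ic.
  exact: delta_Bot (negbT ic).
- rewrite /= -negE; case: (boolP (i \in val c)) => ic /=; last first.
    exact: signed_neg_insert (delta_Bot hi ic) IH.
  have hC : S ⊢ Bot (~: val c) by apply: delta_Bot hi _; rewrite inE ic.
  case: (eval v i psi) IH => /= h.
    by apply/negN_negE; apply: (@signed_neg_insert _ true) hC h.
  rewrite -[val c]setCK; apply/negN_negE.
  exact: (@signed_neg_insert _ false) hC h.
- rewrite /= geq_max => /andP [/IHa {}IHa /IHb {}IHb].
  case: (eval v i a) IHa => /= ha; last exact: imp_absurd.
  by case: (eval v i b) IHb => /= hb; [exact: imp_const | exact: neg_imp].
Qed.

Definition world_ctx (k : nat) (v : valuation n) (i : 'I_n) : form n -> Prop :=
  fun x => x = delta i \/ exists2 p, (p < k)%N & x = signed (v p i) (Var n p).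

Lemma world_ctx_tautology v i phi :
  tautology phi -> world_ctx (var_bound phi) v i ⊢ phi.
Proof.
move=> taut; have := @delta_signed_eval _ v i _ phi _ _ (leqnn _).
rewrite taut; apply; first by apply: d_hyp; left.
by move=> p lt_p; apply: d_hyp; right; exists p.
Qed.

Lemma world_ctx_drop_letter i k phi :
  (forall v, world_ctx k.+1 v i ⊢ phi) -> forall v, world_ctx k v i ⊢ phi.
Proof.
move=> h v; pose vk (b : bool) : valuation n :=
  fun p j => if p == k then b else v p j.
have ctx_sub (b : bool) x : world_ctx k.+1 (vk b) i x ->
    with_hyp (world_ctx k v i) (signed b (Var n k)) x.
  case=> [->|[p lt_p ->]]; first by left; left.
  rewrite /vk; have [->|pk] := eqVneq p k; first by right.
  by left; right; exists p; rewrite // ltn_neqAle pk -ltnS.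
apply: (@with_hyp_cases _ (Var n k)).
  exact: derivable_mono (ctx_sub true) (h (vk true)).
exact: derivable_mono (ctx_sub false) (h (vk false)).
Qed.

Lemma delta_imp_tautology i phi :
  tautology phi -> provable (Imp (delta i) phi).
Proof.
move=> taut; have : forall v, world_ctx (var_bound phi) v i ⊢ phi.
  by move=> v; apply: world_ctx_tautology.
elim: (var_bound phi) => [|k IH] h; last exact/IH/world_ctx_drop_letter.
apply: deduction; apply: derivable_mono (h (fun _ _ => true)).
by move=> x [->|[]//]; right.
Qed.

Lemma provable_of_delta_imp phi :
  (forall i, provable (Imp (delta i) phi)) -> provable phi.
Proof.
move=> h; apply: (@with_hyp_cases _ phi); first exact: with_hyp_self.
pose T := with_hyp (fun _ => False) (¬ phi).
have Bot_set1 i : T ⊢ Bot [set i].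
  rewrite -[[set i]]setCK; apply: Bot_setC.
  exact: mp (contraposition (with_hypW _ (h i))) (with_hyp_self _ _).
exact: absurd (negN_BotT T) (Bot_bigcup (fun i _ => Bot_set1 i)).
Qed.

End PositiveArity.

End Calculus.

Theorem mainTheorem15 (n : nat) (hn : (0 < n)%N) (phi : form n) :
  tautology phi -> provable phi.
Proof.
move=> taut; apply: (provable_of_delta_imp hn) => i.
exact: delta_imp_tautology.
Qed.
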